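(* Let $d_\rho,d_v\ge1$ and let $X$ be a finite set. Let complex arrays $U^{ab}_{ij}$, $R^{yx}_{ab}$, $V^{yx}_{ij}$ and vectors $(e_x)_{x\in X}$, $(u_x)_{x\in X}$ be given (indices $a,b\in\{1,\dots,d_\rho\}$, $i,j\in\{1,\dots,d_v\}$, $x,y\in X$) satisfying, for all indices: (1) $\sum_{z\in X}R^{yz}_{ab}V^{zx}_{ij}=\sum_{z\in X}\sum_{k=1}^{d_v}\sum_{c=1}^{d_\rho}V^{yz}_{ik}R^{zx}_{ac}U^{cb}_{kj}$; (2) $\sum_{y}e_yV^{yx}_{ij}=\delta_{ij}e_x$; (3) $\sum_xR^{yx}_{ab}u_x=\delta_{ab}u_y$; (4) $\sum_xe_xu_x=1$. For $n\ge1$ define $$M_n(a_1,i_1,\dots,a_n,i_n;b_1,j_1,\dots,b_n,j_n)=\sum_{x_0,\dots,x_{2n}\in X}e_{x_0}\prod_{m=1}^{n}\Big(R^{x_{2m-2}x_{2m-1}}_{a_mb_m}V^{x_{2m-1}x_{2m}}_{i_mj_m}\Big)u_{x_{2n}},$$ and define $T_n$ recursively by $T_1(a_1,i_1;b_1,j_1)=U^{a_1b_1}_{i_1j_1}$ and, for $n\ge2$, $$T_n(a_1,i_1,\dots,a_n,i_n;b_1,j_1,\dots,b_n,j_n)=\sum_{c_1,\dots,c_{n-1}}\sum_{k_2,\dots,k_n}T_{n-1}(a_1,i_2,a_2,i_3,\dots,a_{n-1},i_n;c_1,k_2,c_2,k_3,\dots,c_{n-1},k_n)\prod_{m=1}^nU^{c_mb_m}_{k_mj_m},$$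 with the conventions $k_1:=i_1$, $c_n:=a_n$ (sums over $c_m\in\{1,\dots,d_\rho\}$, $k_m\in\{1,\dots,d_v\}$). Then $M_n=T_n$ for every $n\ge1$.
   Context: $T_n$ is the contraction of a triangular brickwork tensor network built from $n(n+1)/2$ copies of the four-index tensor $U$ (a ''light cone'' of two-site gates with inputs $(b_m,j_m)$ and outputs $(i,a)$), and $M_n$ is a matrix product operator of bond dimension $|X|$ with left boundary vector $e$ and right boundary vector $u$. *)

From HB Require Import structures.
From mathcomp Require Import all_boot all_order all_algebra.
From mathcomp Require Import complex.
From mathcomp Require Import reals.
Set Implicit Arguments. Unset Strict Implicit. Unset Printing Implicit Defensive.
Import Order.TTheory GRing.Theory Num.Theory.
Local Open Scope ring_scope.

(* Index conventions (0-based): U a b i j = U^{ab}_{ij};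
   R y x a b = R^{yx}_{ab};  V y x i j = V^{yx}_{ij}.
   Index strings (a_1,...,a_n) are functions nat -> 'I_d, read at 0..n-1. *)

Section Tensors.
Variables (K : realType) (dr dv : nat) (X : finType).
Local Notation C := (K[i]).
Variables (U : 'I_dr -> 'I_dr -> 'I_dv -> 'I_dv -> C)
          (R : X -> X -> 'I_dr -> 'I_dr -> C)
          (V : X -> X -> 'I_dv -> 'I_dv -> C)
          (e u : X -> C).

Definition Mn (n : nat) (a : nat -> 'I_dr) (i : nat -> 'I_dv)
           (b : nat -> 'I_dr) (j : nat -> 'I_dv) : C :=
  \sum_(x : {ffun 'I_(n.*2).+1 -> X})
     (e (x ord0) *
      (\prod_(m < n) (R (x (inord m.*2)) (x (inord m.*2.+1)) (a m) (b m) *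
                      V (x (inord m.*2.+1)) (x (inord m.*2.+2)) (i m) (j m)))
      * u (x ord_max)).

(* Tp n = T_{n+1} *)
Fixpoint Tp (n : nat) (a : nat -> 'I_dr) (i : nat -> 'I_dv)
         (b : nat -> 'I_dr) (j : nat -> 'I_dv) {struct n} : C :=
  match n with
  | 0 => U (a 0%N) (b 0%N) (i 0%N) (j 0%N)
  | n'.+1 =>
    \sum_(cf : {ffun 'I_n'.+1 -> 'I_dr}) \sum_(kf : {ffun 'I_n'.+1 -> 'I_dv})
      (Tp n' a (fun t => i t.+1) (fun t => cf (inord t)) (fun t => kf (inord t)) *
       \prod_(m < n'.+2)
          U (if (m < n'.+1)%N then cf (inord m) else a m) (b m)
            (if m == 0%N :> nat then i 0%N else kf (inord m.-1)) (j m))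
  end.

Definition Tn (n : nat) := Tp n.-1.

End Tensors.

From HB Require Import structures.
From mathcomp Require Import all_boot all_order all_algebra.
From mathcomp Require Import complex reals.
Set Implicit Arguments. Unset Strict Implicit. Unset Printing Implicit Defensive.
Import Order.TTheory GRing.Theory Num.Theory.
Local Open Scope ring_scope.

(* Hypothesis (1) says R V = V R U: a V can be pulled through the R on its left
   at the cost of one gate U.  Pulling every V of the word e (R V) ... (R V) u one
   step to the left produces a layer of n gates in front of e V (R V) ... (R V) R u.
   The first V is absorbed by e (2) and the last R by u (3), which pins k_1 = i_1
   and c_n = a_n; what is left is M_(n-1) with shifted indices.  This is exactly the
   recursion defining T_n, and M_0 = e.u = 1 (4) starts the induction.  Contractions
   of the MPO are computed as walks of a row vector through a word of transfer
   matrices. *)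

Section FfunInsert.
Variable T : Type.

Definition ffun_ins n (i0 : 'I_n.+1) (t : T) (f : {ffun 'I_n -> T}) : {ffun 'I_n.+1 -> T} :=
  [ffun x => if unlift i0 x is Some y then f y else t].

Lemma ffun_ins_pivot n (i0 : 'I_n.+1) t f : ffun_ins i0 t f i0 = t.
Proof. by rewrite ffunE unlift_none. Qed.

Lemma ffun_ins_lift n (i0 : 'I_n.+1) t f y : ffun_ins i0 t f (lift i0 y) = f y.
Proof. by rewrite ffunE liftK. Qed.

Lemma ffun_ins_I1 (i0 : 'I_1) t (f : {ffun 'I_0 -> T}) : ffun_ins i0 t f = [ffun=> t].
Proof. by apply/ffunP => x; rewrite !ffunE; case: unliftP => [[]|]. Qed.

Lemma ffun_ins_maxE n t (f : {ffun 'I_n.+1 -> T}) m : (m <= n.+1)%N ->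
  ffun_ins ord_max t f (inord m) = if (m < n.+1)%N then f (inord m) else t.
Proof.
move=> le_m_n1; case: ltnP => [lt_m_n1 | ge_m_n1].
  have -> : inord m = lift ord_max (inord m : 'I_n.+1).
    by apply: val_inj; rewrite /= /bump !inordK // leqNgt lt_m_n1.
  by rewrite ffun_ins_lift.
have -> : inord m = ord_max :> 'I_n.+2.
  by apply: val_inj; rewrite /= inordK //; apply/eqP; rewrite eqn_leq le_m_n1.
by rewrite ffun_ins_pivot.
Qed.

Lemma ffun_ins_ord0E n t (f : {ffun 'I_n.+1 -> T}) m : (m <= n.+1)%N ->
  ffun_ins ord0 t f (inord m) = if m is m'.+1 then f (inord m') else t.
Proof.
case: m => [|m] le_m_n1.
  have -> : inord 0 = ord0 :> 'I_n.+2 by apply: val_inj; rewrite /= inordK.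
  by rewrite ffun_ins_pivot.
have -> : inord m.+1 = lift ord0 (inord m : 'I_n.+1).
  by apply: val_inj; rewrite /= /bump !inordK.
by rewrite ffun_ins_lift.
Qed.

End FfunInsert.

Lemma sum_ffun_ins (M : nmodType) (T : finType) n (i0 : 'I_n.+1)
    (G : {ffun 'I_n.+1 -> T} -> M) :
  \sum_F G F = \sum_t \sum_(f : {ffun 'I_n -> T}) G (ffun_ins i0 t f).
Proof.
rewrite pair_bigA /= (reindex (fun p : T * {ffun 'I_n -> T} => ffun_ins i0 p.1 p.2)) //.
exists (fun F : {ffun 'I_n.+1 -> T} => (F i0, [ffun y => F (lift i0 y)])).
  move=> [t f] _ /=; rewrite ffun_ins_pivot; congr pair.
  by apply/ffunP => y; rewrite ffunE ffun_ins_lift.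
by move=> F _; apply/ffunP => x; rewrite ffunE; case: unliftP => [y ->|->]; rewrite ?ffunE.
Qed.

Lemma sum_ffun1 (M : nmodType) (T : finType) (G : {ffun 'I_1 -> T} -> M) :
  \sum_F G F = \sum_t G [ffun=> t].
Proof.
rewrite (sum_ffun_ins ord0); apply: eq_bigr => t _.
under eq_bigr do rewrite ffun_ins_I1.
by rewrite sumr_const card_ffun card_ord expn0.
Qed.

Lemma sum_ffun_pin (S : pzSemiRingType) (T : finType) n (i0 : 'I_n.+1) (t0 : T)
    (G : {ffun 'I_n.+1 -> T} -> S) :
  \sum_(F : {ffun 'I_n.+1 -> T}) (t0 == F i0)%:R * G F =
  \sum_(f : {ffun 'I_n -> T}) G (ffun_ins i0 t0 f).
Proof.
rewrite (sum_ffun_ins i0) (bigD1 t0) //= [X in _ + X]big1 => [|t ne_t_t0].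
  by rewrite addr0; apply: eq_bigr => f _; rewrite ffun_ins_pivot eqxx mul1r.
by apply: big1 => f _; rewrite ffun_ins_pivot eq_sym (negPf ne_t_t0) mul0r.
Qed.

Lemma prod_ord_double (S : pzSemiRingType) n (F : nat -> S) :
  \prod_(m < n.*2) F m = \prod_(m < n) (F m.*2 * F m.*2.+1).
Proof.
elim: n => [|n IHn]; first by rewrite !big_ord0.
by rewrite doubleS !big_ord_recr /= IHn mulrA.
Qed.

Section Walks.
Variables (S : pzSemiRingType) (X : finType).
Implicit Types (w : X -> S) (A B : X -> X -> S) (W E O : nat -> X -> X -> S).

Definition vmul w A : X -> S := fun x => \sum_y w y * A y x.

Definition mmul A B : X -> X -> S := fun y x => \sum_z A y z * B z x.

Fixpoint walk w W N : X -> S := if N is N'.+1 then vmul (walk w W N') (W N') else w.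

Definition alt_word E O m : X -> X -> S := if odd m then O m./2 else E m./2.

Lemma vmulA w A B x : vmul (vmul w A) B x = vmul w (mmul A B) x.
Proof.
rewrite /vmul /mmul; under eq_bigr do rewrite mulr_suml.
rewrite exchange_big; apply: eq_bigr => y _; rewrite mulr_sumr.
by apply: eq_bigr => z _; rewrite mulrA.
Qed.

Lemma vmul_suml (I : finType) (s : I -> S) (ws : I -> X -> S) w A :
  (forall y, w y = \sum_t s t * ws t y) ->
  forall x, vmul w A x = \sum_t s t * vmul (ws t) A x.
Proof.
move=> wE x; rewrite /vmul; under eq_bigr do rewrite wE mulr_suml.
rewrite exchange_big; apply: eq_bigr => t _; rewrite mulr_sumr.
by apply: eq_bigr => y _; rewrite mulrA.
Qed.

Lemma vmul_sumr (I : finType) (s : I -> S) (As : I -> X -> X -> S) w A :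
  (forall y x, A y x = \sum_t As t y x * s t) ->
  forall x, vmul w A x = \sum_t vmul w (As t) x * s t.
Proof.
move=> AE x; rewrite /vmul; under eq_bigr do rewrite AE mulr_sumr.
rewrite exchange_big; apply: eq_bigr => t _; rewrite mulr_suml.
by apply: eq_bigr => y _; rewrite mulrA.
Qed.

Lemma walk_add w W m n : walk w W (m + n) = walk (walk w W m) (fun k => W (m + k)%N) n.
Proof. by elim: n => [|n IHn]; rewrite ?addn0 // addnS /= IHn. Qed.

Lemma walk_double w W n :
  walk w W n.+1.*2 = vmul (vmul (walk w W n.*2) (W n.*2)) (W n.*2.+1).
Proof. by rewrite doubleS. Qed.

Lemma eq_walk w W W' N : (forall m, (m < N)%N -> W m = W' m) -> walk w W N = walk w W' N.
Proof.
elim: N => [//|N IHN] eqW /=.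
by rewrite eqW // IHN // => m lt_m_N; rewrite eqW // ltnW.
Qed.

Lemma walk_scale s w w' W N : (forall y, w' y = s * w y) ->
  forall x, walk w' W N x = s * walk w W N x.
Proof.
move=> w'E; elim: N => [//|N IHN] x /=.
rewrite /vmul mulr_sumr; apply: eq_bigr => y _.
by rewrite IHN mulrA.
Qed.

Lemma walk_sum_paths w W (g : X -> S) N :
  \sum_(x : {ffun 'I_N.+1 -> X})
     w (x ord0) * \prod_(m < N) W m (x (inord m)) (x (inord m.+1)) * g (x ord_max)
  = \sum_y walk w W N y * g y.
Proof.
elim: N g => [|N IHN] g.
  by rewrite sum_ffun1; apply: eq_bigr => y _; rewrite big_ord0 !ffunE mulr1.
rewrite (sum_ffun_ins ord_max); apply: eq_bigr => y _.
transitivity (\sum_z walk w W N z * (W N z y * g y)).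
  rewrite -(IHN (fun z => W N z y * g y)); apply: eq_bigr => f _.
  rewrite big_ord_recr /= ffun_ins_pivot -(inord_val ord0) !ffun_ins_maxE //.
  rewrite /= ltnn ltnSn (inord_val ord0) (inord_val ord_max) -!mulrA; congr (_ * (_ * _)).
  apply: eq_bigr => m _; have lt_m_N := ltn_ord m.
  by rewrite !ffun_ins_maxE ?ltnS ?lt_m_N ?(ltnW lt_m_N) ?(leqW (ltnW lt_m_N)).
by rewrite /= /vmul /= mulr_suml; apply: eq_bigr => z _; rewrite mulrA.
Qed.

Lemma alt_word_even E O n : alt_word E O n.*2 = E n.
Proof. by rewrite /alt_word odd_double doubleK. Qed.

Lemma alt_word_odd E O n : alt_word E O n.*2.+1 = O n.
Proof. by rewrite /alt_word /= odd_double uphalf_double. Qed.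

Lemma alt_wordS E O m : alt_word E O m.+1 = alt_word O (fun t => E t.+1) m.
Proof. by rewrite /alt_word /= uphalf_half; case: (odd m). Qed.

End Walks.

Section MatrixProductOperator.
Variables (S : comPzRingType) (dr dv : nat) (X : finType).
Variables (U : 'I_dr -> 'I_dr -> 'I_dv -> 'I_dv -> S)
          (R : X -> X -> 'I_dr -> 'I_dr -> S)
          (V : X -> X -> 'I_dv -> 'I_dv -> S)
          (e u : X -> S).
Implicit Types (a b c : nat -> 'I_dr) (i j k : nat -> 'I_dv) (w : X -> S).

Hypothesis exchangeRV : forall (y x : X) (a b : 'I_dr) (i j : 'I_dv),
  \sum_z R y z a b * V z x i j =
  \sum_z \sum_(k : 'I_dv) \sum_(c : 'I_dr) V y z i k * R z x a c * U c b k j.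
Hypothesis eV_delta : forall (x : X) (i j : 'I_dv),
  \sum_y e y * V y x i j = (i == j)%:R * e x.
Hypothesis Ru_delta : forall (y : X) (a b : 'I_dr),
  \sum_x R y x a b * u x = (a == b)%:R * u y.

Definition Rmx (a b : 'I_dr) : X -> X -> S := fun y x => R y x a b.
Definition Vmx (i j : 'I_dv) : X -> X -> S := fun y x => V y x i j.

Definition RV_word a i c k : nat -> X -> X -> S :=
  alt_word (fun t => Rmx (a t) (c t)) (fun t => Vmx (i t) (k t)).
Definition VR_word a i c k : nat -> X -> X -> S :=
  alt_word (fun t => Vmx (i t) (k t)) (fun t => Rmx (a t) (c t)).

Lemma walk_RV_double w a i b j n :
  walk w (RV_word a i b j) n.+1.*2 =
  vmul (vmul (walk w (RV_word a i b j) n.*2) (Rmx (a n) (b n))) (Vmx (i n) (j n)).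
Proof. by rewrite walk_double /RV_word alt_word_even alt_word_odd. Qed.

Lemma walk_RV_odd w a i b j n :
  walk w (RV_word a i b j) n.*2.+1 = vmul (walk w (RV_word a i b j) n.*2) (Rmx (a n) (b n)).
Proof. by rewrite [LHS]/= /RV_word alt_word_even. Qed.

Lemma walk_VR_double w a i c k n :
  walk w (VR_word a i c k) n.+1.*2 =
  vmul (vmul (walk w (VR_word a i c k) n.*2) (Vmx (i n) (k n))) (Rmx (a n) (c n)).
Proof. by rewrite walk_double /VR_word alt_word_even alt_word_odd. Qed.

Lemma vmul_RV w (a b : 'I_dr) (i j : 'I_dv) x :
  vmul (vmul w (Rmx a b)) (Vmx i j) x =
  \sum_(c : 'I_dr) \sum_(k : 'I_dv) U c b k j * vmul (vmul w (Vmx i k)) (Rmx a c) x.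
Proof.
have RV_VRU y z : mmul (Rmx a b) (Vmx i j) y z =
    \sum_(p : 'I_dr * 'I_dv) mmul (Vmx i p.2) (Rmx a p.1) y z * U p.1 b p.2 j.
  rewrite /mmul exchangeRV; under eq_bigr do rewrite exchange_big pair_bigA.
  rewrite exchange_big; apply: eq_bigr => -[c k] _ /=; rewrite mulr_suml.
  by apply: eq_bigr.
rewrite vmulA (vmul_sumr _ RV_VRU) pair_bigA; apply: eq_bigr => -[c k] _ /=.
by rewrite vmulA mulrC.
Qed.

Lemma vmul_Rmx_u w (a b : 'I_dr) :
  \sum_x vmul w (Rmx a b) x * u x = (a == b)%:R * \sum_y w y * u y.
Proof.
rewrite /vmul /Rmx; under eq_bigr do rewrite mulr_suml.
rewrite exchange_big mulr_sumr; apply: eq_bigr => y _.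
by under eq_bigr do rewrite -mulrA; rewrite -mulr_sumr Ru_delta mulrCA.
Qed.

Lemma walk_RV_push n w a i b j x :
  walk w (RV_word a i b j) n.+1.*2 x =
  \sum_(c : {ffun 'I_n.+1 -> 'I_dr}) \sum_(k : {ffun 'I_n.+1 -> 'I_dv})
    (\prod_(m < n.+1) U (c (inord m)) (b m) (k (inord m)) (j m)) *
    walk w (VR_word a i (fun t => c (inord t)) (fun t => k (inord t))) n.+1.*2 x.
Proof.
elim: n x => [|n IHn] x.
  rewrite walk_RV_double vmul_RV sum_ffun1.
  apply: eq_bigr => c _; rewrite sum_ffun1; apply: eq_bigr => k _.
  by rewrite big_ord1 walk_VR_double !ffunE double0.
have IH2 y : walk w (RV_word a i b j) n.+1.*2 y =
    \sum_(p : {ffun 'I_n.+1 -> 'I_dr} * {ffun 'I_n.+1 -> 'I_dv})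
      (\prod_(m < n.+1) U (p.1 (inord m)) (b m) (p.2 (inord m)) (j m)) *
      walk w (VR_word a i (fun t => p.1 (inord t)) (fun t => p.2 (inord t))) n.+1.*2 y.
  by rewrite IHn pair_bigA.
rewrite walk_RV_double vmul_RV.
under eq_bigr => c0 _ do under eq_bigr => k0 _ do
  rewrite (vmul_suml _ (vmul_suml _ IH2)) mulr_sumr.
rewrite (sum_ffun_ins ord_max); apply: eq_bigr => c0 _.
under [RHS]eq_bigr do rewrite (sum_ffun_ins ord_max).
rewrite [RHS]exchange_big; apply: eq_bigr => k0 _.
rewrite pair_bigA; apply: eq_bigr => -[c k] _; rewrite [(c, k).1]/= [(c, k).2]/=.
have Cc t : (t < n.+1)%N -> ffun_ins ord_max c0 c (inord t) = c (inord t).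
  by move=> lt_t; rewrite ffun_ins_maxE ?lt_t // ltnW.
have Kk t : (t < n.+1)%N -> ffun_ins ord_max k0 k (inord t) = k (inord t).
  by move=> lt_t; rewrite ffun_ins_maxE ?lt_t // ltnW.
rewrite [in RHS]big_ord_recr [in RHS]walk_VR_double !ffun_ins_maxE // ltnn mulrCA -mulrA.
congr (_ * (_ * _)).
  by apply: eq_bigr => m _ /=; rewrite Cc ?Kk.
congr (vmul (vmul _ _) _); symmetry; apply: eq_walk => m lt_m; rewrite /VR_word.
have lt_half : (m./2 < n.+1)%N by rewrite ltn_half_double.
by rewrite /alt_word Cc ?Kk.
Qed.

Lemma walk_VR_boundary n a i c k :
  \sum_x walk e (VR_word a i c k) n.+1.*2 x * u x =
  (a n == c n)%:R * (i 0%N == k 0%N)%:R *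
  \sum_x walk e (RV_word a (fun t => i t.+1) c (fun t => k t.+1)) n.*2 x * u x.
Proof.
have shift m : VR_word a i c k (1 + m) = RV_word a (fun t => i t.+1) c (fun t => k t.+1) m.
  by rewrite add1n /VR_word alt_wordS.
have first_step y : walk e (VR_word a i c k) 1 y = (i 0%N == k 0%N)%:R * e y.
  exact: eV_delta.
rewrite doubleS -add1n walk_add (eq_walk _ (fun m _ => shift m)).
under eq_bigr do rewrite (walk_scale _ _ first_step) -mulrA.
rewrite -mulr_sumr -[RHS]mulrA [RHS]mulrCA; congr (_ * _).
by under eq_bigr do rewrite walk_RV_odd; rewrite vmul_Rmx_u.
Qed.

End MatrixProductOperator.

Section LightCone.
Variables (K : realType) (dr dv : nat) (X : finType).
Variables (U : 'I_dr -> 'I_dr -> 'I_dv -> 'I_dv -> K[i])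
          (R : X -> X -> 'I_dr -> 'I_dr -> K[i])
          (V : X -> X -> 'I_dv -> 'I_dv -> K[i])
          (e u : X -> K[i]).
Implicit Types (a b : nat -> 'I_dr) (i j : nat -> 'I_dv).

Hypothesis exchangeRV : forall (y x : X) (a b : 'I_dr) (i j : 'I_dv),
  \sum_z R y z a b * V z x i j =
  \sum_z \sum_(k : 'I_dv) \sum_(c : 'I_dr) V y z i k * R z x a c * U c b k j.
Hypothesis eV_delta : forall (x : X) (i j : 'I_dv),
  \sum_y e y * V y x i j = (i == j)%:R * e x.
Hypothesis Ru_delta : forall (y : X) (a b : 'I_dr),
  \sum_x R y x a b * u x = (a == b)%:R * u y.
Hypothesis eu_one : \sum_x e x * u x = 1.

Lemma Mn_walk n a i b j :
  Mn R V e u n a i b j = \sum_x walk e (RV_word R V a i b j) n.*2 x * u x.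
Proof.
rewrite -walk_sum_paths; apply: eq_bigr => x _.
rewrite (prod_ord_double _ (fun m => RV_word R V a i b j m (x (inord m)) (x (inord m.+1)))).
by congr (_ * _ * _); apply: eq_bigr => m _; rewrite /RV_word alt_word_even alt_word_odd.
Qed.

Lemma Mn0 a i b j : Mn R V e u 0 a i b j = 1.
Proof. by rewrite Mn_walk double0; exact: eu_one. Qed.

Lemma eq_Mn n a i b b' j j' :
  (forall t, (t < n)%N -> b t = b' t) -> (forall t, (t < n)%N -> j t = j' t) ->
  Mn R V e u n a i b j = Mn R V e u n a i b' j'.
Proof.
move=> eq_b eq_j; apply: eq_bigr => x _; congr (_ * _ * _).
by apply: eq_bigr => m _; rewrite eq_b ?eq_j.
Qed.

Lemma Mn_rec n a i b j :
  Mn R V e u n.+1 a i b j =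
  \sum_(c : {ffun 'I_n -> 'I_dr}) \sum_(k : {ffun 'I_n -> 'I_dv})
    (\prod_(m < n.+1) U (ffun_ins ord_max (a n) c (inord m)) (b m)
                        (ffun_ins ord0 (i 0%N) k (inord m)) (j m)) *
    Mn R V e u n a (fun t => i t.+1) (fun t => ffun_ins ord_max (a n) c (inord t))
      (fun t => ffun_ins ord0 (i 0%N) k (inord t.+1)).
Proof.
rewrite Mn_walk.
under eq_bigr do rewrite (walk_RV_push exchangeRV) mulr_suml.
under eq_bigr do under eq_bigr do rewrite mulr_suml.
rewrite exchange_big; under eq_bigr do rewrite exchange_big.
under eq_bigr do under eq_bigr do under eq_bigr do rewrite -mulrA.
under eq_bigr do under eq_bigr do
  rewrite -mulr_sumr (walk_VR_boundary eV_delta Ru_delta) -Mn_walk mulrCA -mulrA.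
under eq_bigr do rewrite -mulr_sumr.
rewrite (inord_val ord_max) (inord_val ord0) (sum_ffun_pin ord_max).
by apply: eq_bigr => c _; rewrite (sum_ffun_pin ord0).
Qed.

Lemma Mn_Tp n a i b j : Mn R V e u n.+1 a i b j = Tp U n a i b j.
Proof.
elim: n a i b j => [|n IHn] a i b j.
  rewrite Mn_rec; under eq_bigr do under eq_bigr do
    rewrite big_ord1 !ffun_ins_I1 !ffunE Mn0 mulr1.
  by rewrite !sumr_const !card_ffun !card_ord !expn0.
rewrite Mn_rec; apply: eq_bigr => c _; apply: eq_bigr => k _.
rewrite mulrC; congr (_ * _).
  apply: etrans _ (IHn _ _ _ _); apply: eq_Mn => t lt_t.
    by rewrite ffun_ins_maxE ?lt_t // ltnW.
  by rewrite ffun_ins_ord0E.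
apply: eq_bigr => -[m lt_m] _ /=.
rewrite ffun_ins_maxE ?ffun_ins_ord0E //; case: m lt_m => [|m] lt_m //=.
case: ltnP => // le_n_m; congr (U (a _) _ _ _).
by apply/eqP; rewrite eqn_leq le_n_m -ltnS.
Qed.

End LightCone.

Theorem mainTheorem2 (K : realType) (dr dv : nat) (X : finType)
  (U : 'I_dr -> 'I_dr -> 'I_dv -> 'I_dv -> K[i])
  (R : X -> X -> 'I_dr -> 'I_dr -> K[i])
  (V : X -> X -> 'I_dv -> 'I_dv -> K[i])
  (e u : X -> K[i]) :
  (0 < dr)%N -> (0 < dv)%N ->
  (forall (y x : X) (a b : 'I_dr) (i j : 'I_dv),
     \sum_(z : X) R y z a b * V z x i j =
     \sum_(z : X) \sum_(k : 'I_dv) \sum_(c : 'I_dr) V y z i k * R z x a c * U c b k j) ->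
  (forall (x : X) (i j : 'I_dv), \sum_(y : X) e y * V y x i j = (i == j)%:R * e x) ->
  (forall (y : X) (a b : 'I_dr), \sum_(x : X) R y x a b * u x = (a == b)%:R * u y) ->
  \sum_(x : X) e x * u x = 1 ->
  forall (n : nat), (1 <= n)%N ->
  forall (a : nat -> 'I_dr) (i : nat -> 'I_dv) (b : nat -> 'I_dr) (j : nat -> 'I_dv),
    Mn R V e u n a i b j = Tn U n a i b j.
Proof.
move=> _ _ exchangeRV eV_delta Ru_delta eu_one [//|n] _ a i b j.
exact: Mn_Tp.
Qed.
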